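(* Fix a positive integer $k$ and let $a_n=\Gamma(k,n)$ for $n\ge 1$. (1) If $k$ is odd, then $(a_n)_{n\ge1}$ is periodic with period $k$, and among $a_1,\ldots,a_k$ the number of $1$'s is one more than the number of $2$'s. (2) If $k$ is even, then $(a_n)_{n\ge1}$ is periodic with period $2k$, and among $a_1,\ldots,a_{2k}$ the number of $1$'s is two more than the number of $2$'s.
   Context: For relatively prime positive integers $p,q$, exactly one of the equations $px+qy=\frac{(p-1)(q-1)}{2}$ (Equation 1) and $px+qy+1=\frac{(p-1)(q-1)}{2}$ (Equation 2) has a solution in nonnegative integers $(x,y)$. For positive integers $a,b$ with $d=\gcd(a,b)$, $\Gamma(a,b)=1$ if Equation 1 with $(p,q)=(a/d,b/d)$ has a nonnegative integer solution, and $\Gamma(a,b)=2$ otherwise. The period of a sequence $(a_n)_{n\ge1}$ is the smallest positive integer $T$ such that $a_n=a_{n+T}$ for all $n\ge 1$. *)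

From mathcomp Require Import all_boot.
From Stdlib Require Import ClassicalDescription.
Set Implicit Arguments. Unset Strict Implicit. Unset Printing Implicit Defensive.

(* Equation 1: p x + q y = (p-1)(q-1)/2 has a solution in nonnegative integers.
   For coprime p, q the product (p-1)(q-1) is even, so %/ 2 is exact. *)
Definition eq1_solvable (p q : nat) : Prop :=
  exists x y : nat, p * x + q * y = ((p - 1) * (q - 1)) %/ 2.

Definition Gamma (a b : nat) : nat :=
  let d := gcdn a b in
  if excluded_middle_informative (eq1_solvable (a %/ d) (b %/ d)) then 1 else 2.

Definition is_shift (u : nat -> nat) (T : nat) : Prop :=
  forall n, 1 <= n -> u n = u (n + T).

Definition is_period (u : nat -> nat) (T : nat) : Prop :=
  0 < T /\ is_shift u T /\ (forall T', 0 < T' -> is_shift u T' -> T <= T').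

From Stdlib Require Import ClassicalDescription.
From mathcomp Require Import all_boot zify.

Set Implicit Arguments.
Unset Strict Implicit.
Unset Printing Implicit Defensive.

(* For coprime p > 1 and q, put g = (p-1)(q-1)/2.  A solution of p x + q y = g has
   2y+1 < p, and conversely such a y with q y = g (mod p) yields a solution; so Equation 1
   holds iff the root y < p of q y = g (mod p) lies in the lower half of the residues.
   Replacing q by q + m p does not move this root, while replacing q by m p - q (with
   (p-1) m even) moves it to p-1-y; since the middle residue (p-1)/2 is never a root,
   exactly one of q and m p - q satisfies Equation 1.  As Gamma(k, n) only depends on the
   reduced pair (k/d, n/d), this gives a_(n+mk) = a_n and a_(mk-n) <> a_n, for m = 1 when
   k is odd and for m = 2, n <> k in general.  Pairing n with k - n (resp. 2k - n) then
   counts the 1s and 2s.  A shift g dividing the period T cuts [1, T] into T/g identical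
   blocks, so T/g divides the excess 1 (resp. 2) of 1s over 2s; in the even case the only
   remaining candidate g = k fails because a_1 = 1 <> a_(k+1). *)

Lemma mod_root_exists p q N : 0 < p -> coprime p q ->
  exists2 y, y < p & q * y = N %[mod p].
Proof.
move=> p_gt0 cpq; have [q0 | q_gt0] := posnP q.
  by move: cpq; rewrite q0 /coprime gcdn0 => /eqP ->; exists 0; rewrite ?modn1.
have [u v Euv _] := egcdnP p q_gt0.
exists (u * N %% p); first exact: ltn_pmod.
by rewrite modnMmr mulnA [q * u]mulnC Euv gcdnC (eqP cpq) mulnDl mul1n mulnAC modnMDl.
Qed.

Lemma mod_root_uniq p q y z : coprime p q -> y < p -> z < p ->
  q * y = q * z %[mod p] -> y = z.
Proof.
wlog le_zy : y z / z <= y => [hw cpq yp zp e | cpq yp zp].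
  by case: (leqP z y) => [/hw|/ltnW /hw h]; [apply | symmetry; apply: h].
move/eqP; rewrite eqn_mod_dvd ?leq_mul2l ?le_zy ?orbT // -mulnBr (Gauss_dvdr _ cpq).
have [|yz_gt0 /(dvdn_leq yz_gt0)] := posnP (y - z); lia.
Qed.

Lemma mod_root_reflect p q q' m N N' y : y < p -> q + q' = m * p ->
  N' = N + q %[mod p] -> q * y = N %[mod p] -> q' * (p.-1 - y) = N' %[mod p].
Proof.
move=> yp hqq'.
have E : q * p + q' * (p.-1 - y) = m * (p.-1 - y) * p + (q * y + q).
  have hp : p = p.-1 - y + y + 1 by lia.
  move: (p.-1 - y) hp => z hp.
  by rewrite mulnAC -hqq' {1}hp; lia.
by move=> hN' e; rewrite -(modnMDl q) E modnMDl -modnDml e modnDml hN'.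
Qed.

Lemma mid_root_trivial p q N y : 0 < q -> (2 * y).+1 = p -> 2 * N = p.-1 * q.-1 ->
  q * y = N %[mod p] -> p = 1.
Proof.
move=> q_gt0 hp hN.
have -> : q * y = N + y by nia.
rewrite -[N in RHS]addn0 => /eqP; rewrite eqn_modDl mod0n modn_small; lia.
Qed.

Lemma low_half_ltn p y : (2 * y).+1 < p -> y < p.
Proof. lia. Qed.

Lemma reflect_ltn p y : y < p -> p.-1 - y < p.
Proof. lia. Qed.

Lemma low_half_reflect p y : y < p -> ((2 * (p.-1 - y)).+1 < p) = (p < (2 * y).+1).
Proof. lia. Qed.

Definition low_root (p q N : nat) := exists2 y, (2 * y).+1 < p & q * y = N %[mod p].

Lemma low_root_congr p q q' N N' : q = q' %[mod p] -> N = N' %[mod p] ->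
  low_root p q N <-> low_root p q' N'.
Proof.
move=> eq_q eq_N; split=> -[y low e]; exists y => //.
  by rewrite -modnMml -eq_q modnMml e.
by rewrite -modnMml eq_q modnMml e.
Qed.

Lemma low_root_xor p q q' m N N' : 1 < p -> 0 < q -> coprime p q ->
  2 * N = p.-1 * q.-1 -> q + q' = m * p -> N' = N + q %[mod p] ->
  low_root p q N <-> ~ low_root p q' N'.
Proof.
move=> p_gt1 q_gt0 cpq hN hqq' hN'.
have hN_rev : N = N' + q' %[mod p].
  by rewrite -modnDml hN' modnDml -addnA hqq' addnC modnMDl.
have hq'q : q' + q = m * p by rewrite addnC.
split=> [[y1 low1 e1] [y2 low2 e2] | no_low'].
  have y2p := low_half_ltn low2.
  have e := mod_root_reflect y2p hq'q hN_rev e2.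
  have y1E := mod_root_uniq cpq (low_half_ltn low1) (reflect_ltn y2p) (etrans e1 (esym e)).
  by move: low1; rewrite y1E low_half_reflect // => /(ltn_trans low2); rewrite ltnn.
have [y yp e] := mod_root_exists N (ltnW p_gt1) cpq.
case: (ltngtP (2 * y).+1 p) => [low | high | mid]; first by exists y.
  case: no_low'; exists (p.-1 - y); first by rewrite low_half_reflect.
  exact: mod_root_reflect yp hqq' hN' e.
by move: p_gt1; rewrite (mid_root_trivial q_gt0 mid hN e).
Qed.

(* The genus of the numerical semigroup generated by coprime p and q. *)
Definition genus (p q : nat) := (p - 1) * (q - 1) %/ 2.

Lemma genus_double p q : odd p || odd q -> 2 * genus p q = p.-1 * q.-1.
Proof.
move=> h; rewrite /genus !subn1 divn2 mul2n even_halfK // oddM.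
by case: p q h => [|p] [|q] //=; rewrite ?andbF ?negb_and.
Qed.

Lemma half_predn_mul p m : odd p || ~~ odd m -> exists c, 2 * c = p.-1 * m.
Proof.
move=> h; exists (p.-1 * m)./2; rewrite mul2n even_halfK // oddM.
by case: p h => [|p] //=; case: (odd p); case: (odd m).
Qed.

Lemma odd_shift p q m : odd p || odd q -> odd p || ~~ odd m -> odd p || odd (q + m * p).
Proof. by rewrite oddD oddM; case: (odd p); case: (odd q); case: (odd m). Qed.

Lemma genus_shift p q m : 0 < q -> odd p || odd q -> odd p || ~~ odd m ->
  genus p (q + m * p) = genus p q %[mod p].
Proof.
move=> q_gt0 hpq hpm; have hpq' := odd_shift hpq hpm.
have [c hc] := half_predn_mul hpm.
suff -> : genus p (q + m * p) = genus p q + c * p by rewrite addnC modnMDl.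
apply/eqP; rewrite -(eqn_pmul2l (isT : 0 < 2)) mulnDr mulnA hc !genus_double //.
by rewrite -mulnA -mulnDr -[q in (q + _).-1](prednK q_gt0) addSn.
Qed.

Lemma genus_reflect p q q' m : 0 < q -> 0 < q' -> q + q' = m * p ->
  odd p || odd q -> odd p || odd q' -> odd p || ~~ odd m ->
  genus p q' = genus p q + q %[mod p].
Proof.
move=> q_gt0 q'_gt0 hqq' hpq hpq' hpm.
have [c hc] := half_predn_mul hpm.
suff E : genus p q' + q * p = genus p q + q + c * p.
  by rewrite -(modnMDl q) addnC E addnC modnMDl.
apply/eqP; rewrite -(eqn_pmul2l (isT : 0 < 2)) !mulnDr [2 * (c * p)]mulnA hc.
rewrite !genus_double // -mulnA -hqq' => {hc hpq hpq' hpm}.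
by case: p q q' q_gt0 q'_gt0 hqq' => [|p] [|q] [|q'] //= _ _; lia.
Qed.

(* A solution forces 2 q y < q (p - 1); conversely, for 2y+1 < p the difference
   genus - q y exceeds -p, so the congruence makes it a nonnegative multiple of p. *)
Lemma eq1_solvable_low p q : 1 < p -> 0 < q -> odd p || odd q ->
  eq1_solvable p q <-> low_root p q (genus p q).
Proof.
move=> p_gt1 q_gt0 /genus_double hN; rewrite /eq1_solvable -/(genus p q).
split=> [[x [y e]] | [y low e]].
  exists y; last by rewrite -e [p * x]mulnC modnMDl.
  have : q * (2 * y) < q * p.-1 by nia.
  by rewrite ltn_mul2l => /andP[_]; rewrite ltn_predRL.
have lt_qy : q * y < genus p q + p by nia.
have := divn_eq (q * y) p; have := divn_eq (genus p q) p; rewrite e.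
move: (q * y %/ p) (genus p q %/ p) (genus p q %% p) => a b r Eg Eqy.
have le_ab : a <= b by rewrite -ltnS -(ltn_pmul2r (ltnW p_gt1)); lia.
by exists (b - a), y; rewrite Eg Eqy mulnBr; nia.
Qed.

Lemma coprime_odd p q : coprime p q -> odd p || odd q.
Proof.
move=> cpq; apply/negPn/negP; rewrite negb_or -!dvdn2 => /andP[ep eq].
by have := dvdn_gcd 2 p q; rewrite ep eq (eqP cpq).
Qed.

Lemma coprime_complement p q q' m : q + q' = m * p -> coprime p q -> coprime p q'.
Proof.
move=> hqq' cpq; rewrite /coprime -dvdn1 -(eqP cpq) dvdn_gcd dvdn_gcdl /=.
by rewrite -(dvdn_addl _ (dvdn_gcdr p q')) hqq' dvdn_mull ?dvdn_gcdl.
Qed.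

Lemma eq1_solvable1l q : eq1_solvable 1 q.
Proof. by exists 0, 0; rewrite subnn !muln0. Qed.

Lemma eq1_solvable1r p : eq1_solvable p 1.
Proof. by exists 0, 0; rewrite subnn !muln0. Qed.

Lemma eq1_solvable_pred p : ~~ odd p -> eq1_solvable p p.-1.
Proof.
move=> ep; exists 0, p./2.-1; rewrite muln0 add0n !subn1.
rewrite (_ : p.-1.-1 = p./2.-1 * 2) ?mulnA ?mulnK //.
by rewrite -{1}(even_halfK ep); case: (p./2) => // c; rewrite doubleS muln2.
Qed.

Lemma eq1_solvable_shift p q m : coprime p q -> odd p || ~~ odd m ->
  eq1_solvable p (q + m * p) <-> eq1_solvable p q.
Proof.
move=> cpq hpm; case: (ltngtP p 1) => [p_lt1 | p_gt1 | ->].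
- by move: p_lt1; rewrite ltnS leqn0 => /eqP->; rewrite muln0 addn0.
- have [q0 | q_gt0] := posnP q.
    by move: cpq p_gt1; rewrite q0 /coprime gcdn0 => /eqP->.
  have hpq := coprime_odd cpq.
  rewrite !eq1_solvable_low ?addn_gt0 ?q_gt0 ?odd_shift //.
  by apply: low_root_congr; [rewrite addnC modnMDl | exact: genus_shift].
- by split=> _; apply: eq1_solvable1l.
Qed.

Lemma eq1_solvable_reflect p q q' m : 1 < p -> 0 < q -> 0 < q' -> q + q' = m * p ->
  coprime p q -> odd p || ~~ odd m -> eq1_solvable p q <-> ~ eq1_solvable p q'.
Proof.
move=> p_gt1 q_gt0 q'_gt0 hqq' cpq hpm.
have hpq := coprime_odd cpq; have hpq' := coprime_odd (coprime_complement hqq' cpq).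
rewrite !eq1_solvable_low //.
apply: (low_root_xor (m := m)) => //; first exact: genus_double.
exact: genus_reflect hqq' hpq hpq' hpm.
Qed.

Lemma is_shift_mul (u : nat -> nat) g j : is_shift u g -> is_shift u (j * g).
Proof.
move=> hg; elim: j => [|j IH] n n_gt0; first by rewrite mul0n addn0.
by rewrite mulSn addnA -IH ?addn_gt0 ?n_gt0 // -hg.
Qed.

Lemma is_shift_gcd (u : nat -> nat) a b : 0 < a -> is_shift u a -> is_shift u b ->
  is_shift u (gcdn a b).
Proof.
move=> a_gt0 ha hb n n_gt0; have [ka kb E _] := egcdnP b a_gt0.
rewrite [RHS](is_shift_mul kb hb) ?addn_gt0 ?n_gt0 // -addnA [gcdn a b + _]addnC -E.
exact: is_shift_mul.
Qed.

Lemma is_period_divisors (u : nat -> nat) T : 0 < T -> is_shift u T ->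
  (forall g, 0 < g -> g %| T -> is_shift u g -> g = T) -> is_period u T.
Proof.
move=> T_gt0 hT hdiv; do 2!split=> //; move=> T' T'_gt0 hT'.
have g_gt0 : 0 < gcdn T' T by rewrite gcdn_gt0 T'_gt0.
have <- := hdiv _ g_gt0 (dvdn_gcdr T' T) (is_shift_gcd T'_gt0 hT' hT).
by rewrite dvdn_leq ?dvdn_gcdl.
Qed.

Lemma count_iota_shift_mul (u : nat -> nat) (a : pred nat) g j : is_shift u g ->
  count (fun n => a (u n)) (iota 1 (j * g)) = j * count (fun n => a (u n)) (iota 1 g).
Proof.
move=> hg; elim: j => [|j IH]; first by rewrite mul0n.
rewrite !mulSn iotaD count_cat [1 + g]addnC iotaDl count_map -IH; congr (_ + _).
by apply: eq_in_count => n; rewrite mem_iota => /andP[n_gt0 _] /=; rewrite addnC -hg.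
Qed.

Lemma count_shift_dvd (u : nat -> nat) (a b : pred nat) T g r :
  g %| T -> is_shift u g ->
  count (fun n => a (u n)) (iota 1 T) = count (fun n => b (u n)) (iota 1 T) + r ->
  T %/ g %| r.
Proof.
move=> gT hg; rewrite -{1 2}(divnK gT) !count_iota_shift_mul // => E.
have : T %/ g %| T %/ g * count (fun n => a (u n)) (iota 1 g) := dvdn_mulr _ (dvdnn _).
by rewrite E dvdn_addr // dvdn_mulr.
Qed.

Lemma eq_in_count_add (T : eqType) (s : seq T) (a b c d : pred T) :
  {in s, forall x, a x + b x = c x + d x} -> count a s + count b s = count c s + count d s.
Proof.
elim: s => //= x s IH h; rewrite addnACA [RHS]addnACA h ?mem_head // IH // => y ys.
by apply: h; rewrite inE ys orbT.
Qed.

Lemma count_iota_reflect (a : pred nat) M :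
  count (fun n => a (M - n)) (iota 1 M.-1) = count a (iota 1 M.-1).
Proof.
have -> : iota 1 M.-1 = index_iota 1 M by rewrite /index_iota subn1.
rewrite -!sum1_count [RHS]big_nat_rev; apply: eq_bigl => n /=.
by rewrite add1n subSS.
Qed.

Lemma count_reflect_pairs (a e : pred nat) M :
  {in iota 1 M.-1, forall n, a n + a (M - n) = 1 + e n} ->
  2 * count a (iota 1 M.-1) = M.-1 + count e (iota 1 M.-1).
Proof.
move=> h; rewrite mul2n -addnn -[X in _ + X](count_iota_reflect a M).
by rewrite (eq_in_count_add (c := predT) h) count_predT size_iota.
Qed.

Lemma count_iota1_last (a : pred nat) M : 0 < M ->
  count a (iota 1 M) = count a (iota 1 M.-1) + a M.
Proof.
by case: M => // M _; rewrite -[X in iota 1 X]addn1 iotaD count_cat /= add1n addn0.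
Qed.

Lemma Gamma1P k n : Gamma k n = 1 <-> eq1_solvable (k %/ gcdn k n) (n %/ gcdn k n).
Proof. by rewrite /Gamma; case: excluded_middle_informative. Qed.

Lemma Gamma_cases k n : Gamma k n = 1 \/ Gamma k n = 2.
Proof. by rewrite /Gamma; case: excluded_middle_informative; [left | right]. Qed.

Lemma Gamma_congr k n k' n' :
  (Gamma k n = 1 <-> Gamma k' n' = 1) -> Gamma k n = Gamma k' n'.
Proof.
by case: (Gamma_cases k n) (Gamma_cases k' n') => -> [] -> // [h1 h2]; rewrite ?h1 ?h2.
Qed.

Lemma Gamma_neq_eq1 k n k' n' : Gamma k n != Gamma k' n' ->
  (Gamma k n == 1) + (Gamma k' n' == 1) = 1.
Proof. by case: (Gamma_cases k n) (Gamma_cases k' n') => -> [] ->. Qed.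

Lemma Gamma1_scaled p q d : 0 < d -> coprime p q ->
  Gamma (p * d) (q * d) = 1 <-> eq1_solvable p q.
Proof. by move=> d_gt0 cpq; rewrite Gamma1P -muln_gcdl (eqP cpq) mul1n !mulnK. Qed.

Lemma coprime_cofactors k n : 0 < k ->
  exists p q d, [/\ 0 < d, coprime p q, k = p * d & n = q * d].
Proof.
move=> k_gt0; set d := gcdn k n; have d_gt0 : 0 < d by rewrite gcdn_gt0 k_gt0.
have [dk dn] : d %| k /\ d %| n by rewrite dvdn_gcdl dvdn_gcdr.
exists (k %/ d), (n %/ d), d; rewrite !divnK //; split=> //.
by rewrite /coprime -(eqn_pmul2r d_gt0) mul1n muln_gcdl !divnK.
Qed.

Lemma Gamma_mull k q : 0 < k -> Gamma k (q * k) = 1.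
Proof.
move=> k_gt0; rewrite -[k in Gamma k]mul1n.
by apply/(Gamma1_scaled k_gt0 (coprime1n q)); apply: eq1_solvable1l.
Qed.

Lemma Gamma_1 k : Gamma k 1 = 1.
Proof. by apply/Gamma1P; rewrite gcdn1 !divn1; apply: eq1_solvable1r. Qed.

Lemma Gamma_shift k n m : odd k || ~~ odd m -> Gamma k (n + m * k) = Gamma k n.
Proof.
move=> hkm; have [-> | k_gt0] := posnP k; first by rewrite muln0 addn0.
have [p [q [d [d_gt0 cpq ek en]]]] := coprime_cofactors n k_gt0; subst k n.
have cpq' : coprime p (q + m * p) by rewrite /coprime addnC gcdnMDl.
have hpm : odd p || ~~ odd m by move: hkm; rewrite oddM; case: (odd p).
apply: Gamma_congr; rewrite mulnA -mulnDl !Gamma1_scaled //.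
exact: eq1_solvable_shift.
Qed.

Lemma Gamma_reflect k n m : 0 < n < m * k -> ~~ (k %| n) -> odd k || ~~ odd m ->
  Gamma k (m * k - n) != Gamma k n.
Proof.
move=> /andP[n_gt0 n_lt] kn hkm.
have k_gt0 : 0 < k by rewrite lt0n; apply: contraTneq n_lt => ->; rewrite muln0.
have [p [q [d [d_gt0 cpq ek en]]]] := coprime_cofactors n k_gt0; subst k n.
move: n_gt0 n_lt kn hkm k_gt0; rewrite mulnA ltn_pmul2r // dvdn_pmul2r // oddM !muln_gt0.
move=> /andP[q_gt0 _] q_lt pq hkm /andP[p_gt0 _]; rewrite -mulnBl.
have p_gt1 : 1 < p by case: p p_gt0 pq {cpq q_lt hkm} => [|[|]] //; rewrite dvd1n.
have hpm : odd p || ~~ odd m by move: hkm; case: (odd p).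
have hqq' : q + (m * p - q) = m * p by rewrite subnKC // ltnW.
have q'_gt0 : 0 < m * p - q by rewrite subn_gt0.
have cpq' := coprime_complement hqq' cpq.
have := eq1_solvable_reflect p_gt1 q_gt0 q'_gt0 hqq' cpq hpm.
rewrite -(Gamma1_scaled d_gt0 cpq) -(Gamma1_scaled d_gt0 cpq').
by move=> G; apply/eqP => E; rewrite E in G; tauto.
Qed.

(* a_1 = 1, whereas a_(k+1) is the reflection of a_(k-1) = 1 through 2k. *)
Lemma Gamma_not_shift_even k : 0 < k -> ~~ odd k -> ~ is_shift (Gamma k) k.
Proof.
move=> k_gt0 ek /(_ 1 (leqnn 1)); rewrite Gamma_1 add1n.
have k_gt1 : 1 < k by case: k k_gt0 ek => [|[|]].
have Gpred : Gamma k k.-1 = 1.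
  apply/Gamma1P; rewrite gcdnC (eqP (coprimePn k_gt0)) !divn1.
  exact: eq1_solvable_pred.
have hn : 0 < k.-1 < 2 * k by lia.
have kn : ~~ (k %| k.-1) by rewrite gtnNdvd ?ltn_predL //; lia.
have := Gamma_reflect hn kn (orbT _).
rewrite Gpred (_ : 2 * k - k.-1 = k.+1); last by lia.
by move=> /eqP neq /esym.
Qed.

Lemma count_Gamma2 k s :
  count (fun n => Gamma k n == 2) s = size s - count (fun n => Gamma k n == 1) s.
Proof.
rewrite -(count_predC (fun n => Gamma k n == 1)) addKn.
by apply: eq_count => n /=; case: (Gamma_cases k n) => ->.
Qed.

Lemma Gamma_count_odd k : odd k ->
  count (fun n => Gamma k n == 1) (iota 1 k) =
    (count (fun n => Gamma k n == 2) (iota 1 k)).+1.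
Proof.
move=> ok; have k_gt0 := odd_gt0 ok.
have half : 2 * count (fun n => Gamma k n == 1) (iota 1 k.-1) =
    k.-1 + count pred0 (iota 1 k.-1).
  apply: count_reflect_pairs => n; rewrite mem_iota add1n prednK // => /andP[n_gt0 n_lt].
  rewrite addnC Gamma_neq_eq1 // -[k in k - n]mul1n Gamma_reflect ?mul1n ?n_gt0 ?ok //.
  by rewrite gtnNdvd.
have Gkk : Gamma k k = 1 by rewrite -[X in Gamma _ X]mul1n; apply: Gamma_mull.
rewrite count_Gamma2 size_iota (count_iota1_last _ k_gt0) Gkk /=.
move: half; rewrite count_pred0; lia.
Qed.

Lemma Gamma_count_even k : 0 < k -> ~~ odd k ->
  count (fun n => Gamma k n == 1) (iota 1 (2 * k)) =
    (count (fun n => Gamma k n == 2) (iota 1 (2 * k))).+2.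
Proof.
move=> k_gt0 ek; have k2_gt0 : 0 < 2 * k by rewrite muln_gt0.
have Gkk : Gamma k k = 1 by rewrite -[X in Gamma _ X]mul1n; apply: Gamma_mull.
have half : 2 * count (fun n => Gamma k n == 1) (iota 1 (2 * k).-1) =
    (2 * k).-1 + count (pred1 k) (iota 1 (2 * k).-1).
  apply: count_reflect_pairs => n; rewrite mem_iota add1n prednK //.
  move=> /andP[n_gt0 n_lt] /=; case: (eqVneq n k) => [-> | n_neq_k].
    by rewrite mul2n -addnn addnK Gkk.
  rewrite addnC Gamma_neq_eq1 // Gamma_reflect ?n_gt0 ?orbT //.
  apply/negP => /dvdnP[j n_eq]; move: n_gt0 n_lt n_neq_k; rewrite n_eq.
  by case: j {n_eq} => [|[|j]]; rewrite ?mul1n ?eqxx //; nia.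
have one_k : count (pred1 k) (iota 1 (2 * k).-1) = 1.
  by rewrite count_uniq_mem ?iota_uniq // mem_iota; apply/eqP; rewrite eqb1; lia.
rewrite count_Gamma2 size_iota (count_iota1_last _ k2_gt0) Gamma_mull //=.
move: half; rewrite one_k; lia.
Qed.

Lemma Gamma_period_odd k : odd k -> is_period (Gamma k) k.
Proof.
move=> ok; apply: is_period_divisors => [|n _|g g_gt0 gk hg]; first exact: odd_gt0.
  by rewrite -[k in n + k]mul1n Gamma_shift ?ok.
have := count_shift_dvd (a := pred1 1) (b := pred1 2) gk hg
  (etrans (Gamma_count_odd ok) (esym (addn1 _))).
by rewrite dvdn1 => /eqP g_eq; rewrite -[RHS](divnK gk) g_eq mul1n.
Qed.

Lemma Gamma_period_even k : 0 < k -> ~~ odd k -> is_period (Gamma k) (2 * k).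
Proof.
move=> k_gt0 ek; apply: is_period_divisors => [|n _|g g_gt0 gk hg].
- by rewrite muln_gt0.
- by rewrite Gamma_shift ?orbT.
have := count_shift_dvd (a := pred1 1) (b := pred1 2) gk hg
  (etrans (Gamma_count_even k_gt0 ek) (esym (addn2 _))).
have := divnK gk; case: (2 * k %/ g) => [|[|[|j]]] //= g_eq.
  by rewrite mul1n in g_eq.
by case: (Gamma_not_shift_even k_gt0 ek); move: hg; rewrite (_ : g = k) //; lia.
Qed.

Theorem theorem1p8 (k : nat) (hk : 0 < k) :
  (odd k ->
     is_period (fun n => Gamma k n) k /\
     count (fun n => Gamma k n == 1) (iota 1 k) =
       (count (fun n => Gamma k n == 2) (iota 1 k)).+1) /\
  (~~ odd k ->
     is_period (fun n => Gamma k n) (2 * k) /\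
     count (fun n => Gamma k n == 1) (iota 1 (2 * k)) =
       (count (fun n => Gamma k n == 2) (iota 1 (2 * k))).+2).
Proof.
split=> [ok | ek].
  by split; [exact: Gamma_period_odd | exact: Gamma_count_odd].
by split; [exact: Gamma_period_even | exact: Gamma_count_even].
Qed.
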